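(* Let $r_0,\dots,r_{f-1}$ be integers in $[1,p]$, let $J\subset\{0,\dots,f-1\}$, and set $h_i=r_i$ if $i\in J$, $h_i=0$ if $i\notin J$. Fix $a,b\in k_E^\times$. Let $\overline{\mathfrak M}$ be an extension of $\overline{\mathfrak M}(h_0,\dots,h_{f-1};a)$ by $\overline{\mathfrak M}(r_0-h_0,\dots,r_{f-1}-h_{f-1};b)$. Then one can choose $k_E[[u]]$-bases $e_i,f_i$ of $\overline{\mathfrak M}_i$ such that $$\varphi(e_{i-1})=(b)_iu^{r_i-h_i}e_i,\qquad\varphi(f_{i-1})=(a)_iu^{h_i}f_i+x_ie_i$$ with each $x_i\in k_E[[u]]$ a polynomial of degree $<h_i$, except in the following cases: (i) $(r_0,\dots,r_{f-1})\in\mathcal P$, $J=\{i: r_{i-1}\ne p\}$ and $a=b$; or (ii) $p=2$, $(r_0,\dots,r_{f-1})=(2,\dots,2)$, $J=\{0,\dots,f-1\}$ and $a=b$. In these exceptional cases, for any fixed $i_0\in J$, the $x_i$ may be taken to be polynomials of degree $<h_i$ for all $i\ne i_0$, and $x_{i_0}$ the sum of a polynomial of degree $<h_{i_0}$ and a (possibly zero) monomial of degree $p$ (in case (i)) or degree $4$ (in case (ii)).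
   Context: $K/\mathbb Q_p$ is unramified of degree $f$ with residue field $k$, $\mathfrak S=W(k)[[u]]$ with Frobenius $\varphi$ (Witt Frobenius, $u\mapsto u^p$). $E$ is a finite extension of $\mathbb Q_p$ containing all embeddings of $K$, with integers $\mathcal O_E$ and residue field $k_E$. Fix $\kappa_0\colon K\hookrightarrow E$, $\kappa_{s+1}^p\equiv\kappa_s\pmod p$ (indices mod $f$); $\varepsilon_s\in W(k)\otimes_{\mathbb Z_p}\mathcal O_E$ is the idempotent with $(x\otimes1)\varepsilon_s=(1\otimes\kappa_s(x))\varepsilon_s$, and $M_s=\varepsilon_sM$, so $\mathfrak S\otimes_{\mathbb Z_p}k_E=\prod_sk_E[[u]]$ and $\varphi$ maps the $(s-1)$-component to the $s$-component. For integers $r_i\ge0$ and $a\in k_E^\times$, $\overline{\mathfrak M}(r_0,\dots,r_{f-1};a)$ is the free rank one $\mathfrak S\otimes_{\mathbb Z_p}k_E$-module with semilinear $\varphi$ such that the $i$-th component is generated by $e_i$ and $\varphi(e_{i-1})=(a)_iu^{r_i}e_i$, where $(a)_i=a$ if $i\equiv0\pmod f$ and $(a)_i=1$ otherwise. An extension of $\mathfrak A$ by $\mathfrak B$ is a short exact sequence $0\to\mathfrak B\to\overline{\mathfrak M}\to\mathfrak A\to0$ of $\mathfrak S\otimes k_E$-modules with $k_E$-linear semilinear $\varphi$. $\mathcal P$ is the set of $f$-tuples $(r_0,\dots,r_{f-1})$ with $r_i\in\{1,p-1,p\}$ such that (indices mod $f$) $r_i=p\Rightarrow r_{i+1}=1$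 and $r_i\in\{1,p-1\}\Rightarrow r_{i+1}\in\{p-1,p\}$. *)

(* Formal power series k_E[[u]] over a field, and the
   data needed to state Theorem 8 about extensions of rank-one
   Kisin-type phi-modules over S (x) k_E = prod_{i < f} k_E[[u]]. *)
From HB Require Import structures.
From mathcomp Require Import all_boot all_order all_algebra.
From Stdlib Require Import ClassicalEpsilon FunctionalExtensionality.
Set Implicit Arguments.
Unset Strict Implicit.
Unset Printing Implicit Defensive.
Import Order.TTheory GRing.Theory Num.Theory.
Local Open Scope ring_scope.

Record pser (R : Type) := Pser { coefs : nat -> R }.
Arguments Pser {R}.

Section PserChoice.
Variable R : Type.

Lemma pser_ext (x y : pser R) : (forall n, coefs x n = coefs y n) -> x = y.
Proof.
case: x; case: y => g h E; congr Pser; exact: functional_extensionality.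
Qed.

Definition pser_eqb (x y : pser R) : bool :=
  if excluded_middle_informative (x = y) then true else false.
Lemma pser_eqP : Equality.axiom pser_eqb.
Proof.
by move=> x y; rewrite /pser_eqb; case: excluded_middle_informative => H;
  constructor.
Qed.
HB.instance Definition _ := hasDecEq.Build (pser R) pser_eqP.

Definition pser_find (P : pred (pser R)) (n : nat) : option (pser R) :=
  match excluded_middle_informative (exists x, P x) with
  | left H => Some (proj1_sig (constructive_indefinite_description _ H))
  | right _ => None
  end.
Lemma pser_find_correct P n x : pser_find P n = Some x -> P x.
Proof.
rewrite /pser_find; case: excluded_middle_informative => // H [<-].
exact: proj2_sig (constructive_indefinite_description _ H).
Qed.
Lemma pser_find_complete (P : pred (pser R)) :
  (exists x, P x) -> exists n, pser_find P n.
Proof.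
by move=> H; exists 0%N; rewrite /pser_find; case: excluded_middle_informative.
Qed.
Lemma pser_find_ext (P Q : pred (pser R)) :
  P =1 Q -> pser_find P =1 pser_find Q.
Proof.
by move=> E; have -> : P = Q by apply: functional_extensionality.
Qed.
HB.instance Definition _ := hasChoice.Build (pser R)
  pser_find_correct pser_find_complete pser_find_ext.
End PserChoice.

Section PserRing.
Variable R : comNzRingType.
Implicit Types x y z : pser R.

Definition pser0 : pser R := Pser (fun _ => 0).
Definition pser_opp x : pser R := Pser (fun n => - coefs x n).
Definition pser_add x y : pser R := Pser (fun n => coefs x n + coefs y n).

Fact pser_addA : associative pser_add.
Proof. by move=> x y z; apply: pser_ext => n /=; rewrite addrA. Qed.
Fact pser_addC : commutative pser_add.
Proof. by move=> x y; apply: pser_ext => n /=; rewrite addrC. Qed.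
Fact pser_add0 : left_id pser0 pser_add.
Proof. by move=> x; apply: pser_ext => n /=; rewrite add0r. Qed.
Fact pser_addN : left_inverse pser0 pser_opp pser_add.
Proof. by move=> x; apply: pser_ext => n /=; rewrite addNr. Qed.
HB.instance Definition _ :=
  GRing.isZmodule.Build (pser R) pser_addA pser_addC pser_add0 pser_addN.

Definition pser1 : pser R := Pser (fun n => (n == 0)%:R).
Definition pser_mul x y : pser R :=
  Pser (fun i => \sum_(j < i.+1) coefs x j * coefs y (i - j)).

Lemma coef_pser_mul x y i :
  coefs (pser_mul x y) i = \sum_(j < i.+1) coefs x j * coefs y (i - j).
Proof. by []. Qed.

Lemma coef_pser_mul_rev x y i :
  coefs (pser_mul x y) i = \sum_(j < i.+1) coefs x (i - j) * coefs y j.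
Proof.
rewrite /= (reindex_inj rev_ord_inj) /=.
apply: eq_bigr => j _; rewrite subSS subKn // -ltnS; exact: ltn_ord.
Qed.

Fact pser_mulA : associative pser_mul.
Proof.
move=> p q r; apply: pser_ext => i.
rewrite [RHS]coef_pser_mul_rev [LHS]coef_pser_mul.
pose coef3 j k := coefs p j * (coefs q (i - j - k) * coefs r k).
transitivity (\sum_(j < i.+1) \sum_(k < i.+1 | (k <= i - j)%N) coef3 j k).
  apply: eq_bigr => j _; rewrite coef_pser_mul_rev big_distrr /=.
  by rewrite (big_ord_narrow_leq (leq_subr _ _)).
rewrite (exchange_big_dep predT) //; apply: eq_bigr => k _.
transitivity (\sum_(j < i.+1 | (j <= i - k)%N) coef3 j k).
  apply: eq_bigl => j; rewrite -ltnS -(ltnS j) -!subSn ?leq_ord //.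
  by rewrite -subn_gt0 -(subn_gt0 j) -!subnDA addnC.
rewrite (big_ord_narrow_leq (leq_subr _ _)) coef_pser_mul big_distrl /=.
by apply: eq_bigr => j _; rewrite /coef3 -!subnDA addnC mulrA.
Qed.

Fact pser_mulC : commutative pser_mul.
Proof.
move=> x y; apply: pser_ext => i; rewrite coef_pser_mul_rev /=.
by apply: eq_bigr => j _; rewrite mulrC.
Qed.

Fact pser_mul1 : left_id pser1 pser_mul.
Proof.
move=> p; apply: pser_ext => i; rewrite /= big_ord_recl subn0 /= mul1r.
by rewrite big1 ?addr0 // => j _; rewrite mul0r.
Qed.

Fact pser_mulDl : left_distributive pser_mul pser_add.
Proof.
move=> p q r; apply: pser_ext => i /=; rewrite -big_split /=.
by apply: eq_bigr => j _; rewrite mulrDl.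
Qed.

Fact pser_one_neq0 : pser1 != pser0.
Proof.
apply/eqP => /(congr1 (fun x => coefs x 0%N)) /= /eqP; by rewrite oner_eq0.
Qed.

HB.instance Definition _ := GRing.Zmodule_isComNzRing.Build (pser R)
  pser_mulA pser_mulC pser_mul1 pser_mulDl pser_one_neq0.
End PserRing.

Section PserOps.
Variable R : comNzRingType.

Definition pser_u : pser R := Pser (fun n => (n == 1)%:R).
Definition pser_const (c : R) : pser R :=
  Pser (fun n => if n == 0 then c else 0).
Definition pser_deg_lt (x : pser R) (d : nat) : Prop :=
  forall n, (d <= n)%N -> coefs x n = 0.
(* Frobenius of S (x) k_E on a component: k_E-linear, u |-> u^p,
   i.e. sum c_n u^n |-> sum c_n u^(p n). *)
Definition pser_frob (p : nat) (x : pser R) : pser R :=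
  Pser (fun n => if (p %| n)%N then coefs x (n %/ p) else 0).
End PserOps.

Definition iprev (f : nat) (i : 'I_f) : 'I_f := ord_pred i.
Definition inext (f : nat) (i : 'I_f) : 'I_f := ordS i.

(* (a)_i = a if i = 0 mod f, 1 otherwise *)
Definition twist (F : nzRingType) (f : nat) (a : F) (i : 'I_f) : F :=
  if val i == 0%N then a else 1.

Definition hJ (f : nat) (J : {set 'I_f}) (r : 'I_f -> nat) (i : 'I_f) : nat :=
  if i \in J then r i else 0%N.

Definition inP (p f : nat) (r : 'I_f -> nat) : Prop :=
  forall i : 'I_f,
    [/\ r i \in [:: 1%N; p.-1; p],
        r i = p -> r (inext i) = 1%N
      & r i \in [:: 1%N; p.-1] -> r (inext i) \in [:: p.-1; p]].

(* The rank-one modules Mbar(s_0,...,s_{f-1}; c) are modelled concretely: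
   the i-th component is k_E[[u]] with generator 1, and
   phi(x e_{i-1}) = frob(x) (c)_i u^{s_i} e_i. *)
Definition phi_rk1 (F : fieldType) (p f : nat) (s : 'I_f -> nat) (c : F)
  (i : 'I_f) (x : pser F) : pser F :=
  pser_const (twist c i) * pser_u F ^+ s i * pser_frob p x.

(* An extension 0 -> Mbar(s;c) -> M -> Mbar(t;d) -> 0 (B := Mbar(s;c),
   A := Mbar(t;d)) of S(x)k_E-modules with semilinear phi, given
   componentwise: M_i is a k_E[[u]]-module, phiM i : M_{i-1} -> M_i is
   additive and frob-semilinear, iota, pi are k_E[[u]]-linear,
   phi-compatible and form a short exact sequence in each component. *)
Definition is_extension (F : fieldType) (p f : nat)
  (s : 'I_f -> nat) (c : F) (t : 'I_f -> nat) (d : F)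
  (M : 'I_f -> lmodType (pser F))
  (phiM : forall i : 'I_f, M (iprev i) -> M i)
  (iota : forall i : 'I_f, pser F -> M i)
  (pi : forall i : 'I_f, M i -> pser F) : Prop :=
  (forall i (m m' : M (iprev i)), phiM i (m + m') = phiM i m + phiM i m') /\
  (forall i (x : pser F) (m : M (iprev i)),
      phiM i (x *: m) = pser_frob p x *: phiM i m) /\
  (forall i (x y z : pser F), iota i (x * y + z) = x *: iota i y + iota i z) /\
  (forall i (x : pser F) (m m' : M i), pi i (x *: m + m') = x * pi i m + pi i m') /\
  (forall i (x : pser F),
      phiM i (iota (iprev i) x) = iota i (phi_rk1 p s c i x)) /\
  (forall i (m : M (iprev i)),
      pi i (phiM i m) = phi_rk1 p t d i (pi (iprev i) m)) /\
  (forall i, injective (iota i)) /\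
  (forall i (y : pser F), exists m : M i, pi i m = y) /\
  (forall i (m : M i), pi i m = 0 <-> exists x, m = iota i x).

Definition is_basis2 (F : fieldType) (V : lmodType (pser F)) (e g : V) : Prop :=
  forall m : V, exists! xy : pser F * pser F, m = xy.1 *: e + xy.2 *: g.

Definition good_bases (F : fieldType) (p f : nat)
  (s : 'I_f -> nat) (b : F) (t : 'I_f -> nat) (a : F)
  (M : 'I_f -> lmodType (pser F))
  (phiM : forall i : 'I_f, M (iprev i) -> M i)
  (iota : forall i : 'I_f, pser F -> M i)
  (shape : forall i : 'I_f, pser F -> Prop) : Prop :=
  exists (e g : forall i, M i) (x : forall i : 'I_f, pser F),
    [/\ forall i, is_basis2 (e i) (g i),
        forall i (m : M i), (exists y, m = iota i y) <-> (exists y, m = y *: e i),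
        forall i, phiM i (e (iprev i)) =
                  (pser_const (twist b i) * pser_u F ^+ s i) *: e i,
        forall i, phiM i (g (iprev i)) =
                  (pser_const (twist a i) * pser_u F ^+ t i) *: g i
                  + x i *: e i
      & forall i, shape i (x i)].

Arguments is_extension {F} p {f} s c t d M phiM iota pi.
Arguments good_bases {F} p {f} s b t a M phiM iota shape.

From HB Require Import structures.
From mathcomp Require Import all_boot all_order all_algebra.
From mathcomp Require Import zify ring.
From Stdlib Require Import Classical ClassicalEpsilon.
Set Implicit Arguments.
Unset Strict Implicit.
Unset Printing Implicit Defensive.
Import Order.TTheory GRing.Theory Num.Theory.

(* Put e_i = iota_i(1) and choose lifts g0_i of 1 in M_i.  Then
   phi(e_{i-1}) = B_i e_i and phi(g0_{i-1}) = A_i g0_i + x0_i e_i with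
   A_i = (a)_i u^{h_i} and B_i = (b)_i u^{r_i-h_i}.  Replacing g0_i by
   g_i = g0_i + z_i e_i replaces x0_i by x0_i - A_i z_i + B_i phi(z_{i-1}),
   whose coefficient of degree n + h_i is x0_i[n+h_i] - (T z)_i[n] for a
   linear operator T on coefficient families (z_i[n]).  The shape of the x_i
   required by the theorem thus amounts to solving T z = y, except for the
   equations we give up ("cut").  For n >= 3 equation (i, n) refers to z_{i-1}
   in a smaller degree only, so it is solved by recursion; the unknowns of
   degree <= 2 form a finite square system, solvable iff injective.  A kernel
   vector yields a backward chain of degrees along the cycle whose arithmetic
   forces one of the two exceptional configurations, and going once around
   the cycle forces a = b; in an exceptional configuration, cutting the one
   equation of total degree p (resp. 4) at i0 breaks every chain. *)

Section CyclicIndices.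
Variable f : nat.
Implicit Types i j : 'I_f.

Lemma inext_iprev i : inext (iprev i) = i.
Proof. exact: ord_predK. Qed.

Lemma val_iter_inext d i : val (iter d (@inext f) i) = ((i + d) %% f)%N.
Proof.
elim: d => [|d IH] /=; first by rewrite addn0 modn_small.
rewrite /inext /= IH -addn1 modnDml; congr (_ %% _)%N; lia.
Qed.

Lemma iter_inextK d : cancel (iter d (@inext f)) (iter d (@iprev f)).
Proof. by elim: d => [|d IH] i //; rewrite iterSr iterS /iprev /inext ordSK IH. Qed.

Lemma iter_iprevK d : cancel (iter d (@iprev f)) (iter d (@inext f)).
Proof. by elim: d => [|d IH] i //; rewrite iterSr iterS /iprev /inext ord_predK IH. Qed.

Lemma iter_iprev_hits i K j : exists2 k, (K <= k)%N & iter k (@iprev f) i = j.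
Proof.
pose j' := iter K (@iprev f) i; pose d := (j' + f - j)%N.
exists (d + K)%N; first by rewrite leq_addl.
suff E : iter d (@inext f) j = j' by rewrite iterD -/j' -E iter_inextK.
apply: val_inj; have Hj := ltn_ord j; have Hj' := ltn_ord j'.
rewrite val_iter_inext (_ : j + d = j' + f)%N; last by rewrite /d; lia.
by rewrite modnDr modn_small.
Qed.

Lemma iter_iprev_f i : iter f (@iprev f) i = i.
Proof.
suff E : iter f (@inext f) i = i by rewrite -{1}E iter_inextK.
by apply: val_inj; rewrite val_iter_inext modnDr modn_small.
Qed.

Lemma iter_iprev_neq i d : (0 < d < f)%N -> iter d (@iprev f) i != i.
Proof.
move=> Hd; apply/eqP => E.
have := congr1 val (iter_iprevK d i); rewrite E val_iter_inext.
rewrite /=; have Hi := ltn_ord i; case: (ltnP (i + d) f) => H.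
  by rewrite modn_small //; lia.
by rewrite -(subnK H) modnDr modn_small; lia.
Qed.
End CyclicIndices.

Section ChainArithmetic.
Variables (p f : nat) (p_ge2 : 2 <= p) (r : 'I_f -> nat).
Hypothesis r_range : forall i, 1 <= r i <= p.
Variable J : {set 'I_f}.
Local Notation h := (hJ J r).
Local Notation s i := (r i - hJ J r i).

(* Configurations (i) and (ii) of the theorem, without the condition a = b. *)
Definition exceptional_I := inP p r /\ J = [set i | r (iprev i) != p].
Definition exceptional_II := p = 2 /\ (forall i, r i = 2) /\ J = [set: 'I_f].

(* The two exceptional configurations of the theorem, with the degree
   (p, resp. 4) of the monomial that cannot be removed. *)
Definition exceptional_deg (d : nat) :=
  (exceptional_I /\ d = p) \/ (exceptional_II /\ d = 4).

(* (i) and (ii) exclude each other: in (i), r_i = p forces r_{i+1} = 1. *)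
Lemma exceptional_deg_unique d d' :
  0 < f -> exceptional_deg d -> exceptional_deg d' -> d = d'.
Proof.
move=> f_gt0; suff noI_II : exceptional_I -> exceptional_II -> False.
  by case=> [] [E ->] [] [E' ->] //; [case: (noI_II E E') | case: (noI_II E' E)].
move=> [inPr _] [p2 [r2 _]]; have [_ rp _] := inPr (Ordinal f_gt0).
by have := rp (etrans (r2 _) (esym p2)); rewrite r2.
Qed.

Lemma exceptional_I_of_local :
  (forall j, j \in J -> r j + (inext j \in J) = p) ->
  (forall j, j \notin J -> r j = 1 /\ inext j \in J) ->
  exceptional_I.
Proof.
move=> inJ outJ; split.
  move=> i; have := r_range i; have := r_range (inext i).
  have := inJ i; have := outJ i; have := inJ (inext i); have := outJ (inext i).
  case: (i \in J); case: (inext i \in J) => /= Hn1 Hn2 Hi1 Hi2;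
  rewrite ?inE; try (have := Hi1 erefl); try (have := Hi2 erefl);
  try (have := Hn1 erefl); try (have := Hn2 erefl); split; lia.
apply/setP => i; rewrite inE; have := inJ (iprev i); have := outJ (iprev i).
rewrite inext_iprev; case: (iprev i \in J) => /= H1 H2.
  by have := H2 erefl; case: (i \in J) => /=; lia.
by have [-> ->] := H1 erefl; case: eqP => //; lia.
Qed.

(* Such chains
   encode nonzero solutions of the homogeneous low-degree system. *)
Definition is_chain (i : 'I_f) (n : nat -> nat) := forall k,
  let c := iter k (@iprev f) i in
  s c <= n k + h c /\ p * n k.+1 = n k + h c - s c.

Section Chain.
Variables (i : 'I_f) (n : nat -> nat).
Hypotheses (chain : is_chain i n) (n0_le2 : n 0 <= 2).
Local Notation c k := (iter k (@iprev f) i).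

Lemma chain_step k :
  (c k \in J -> p * n k.+1 = n k + r (c k)) /\
  (c k \notin J -> r (c k) <= n k /\ p * n k.+1 = n k - r (c k)).
Proof.
have [lo rel] := chain k; rewrite /hJ in lo rel.
by split => Hc; rewrite ?Hc ?(negbTE Hc) ?subnn ?subn0 in lo rel *; lia.
Qed.

(* Since 1 <= r <= p, the degrees never exceed 2. *)
Lemma chain_le2 k : n k <= 2.
Proof.
elim: k => [|k IH] //; have [inJ outJ] := chain_step k; have := r_range (c k).
by case Hc: (c k \in J) in inJ outJ; [have := inJ erefl | have := outJ erefl]; nia.
Qed.

Lemma chain_le1_step k : n k <= 1 ->
  (c k \in J -> n k.+1 = 1 /\ r (c k) + n k = p) /\
  (c k \notin J -> n k.+1 = 0 /\ n k = 1 /\ r (c k) = 1).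
Proof.
move=> nk_le1; have [inJ outJ] := chain_step k; have := r_range (c k).
split => Hc; [have := inJ Hc | have := outJ Hc]; last by nia.
by case: (n k.+1) => [|[|m]]; nia.
Qed.

Lemma chain_le1_stable k0 k : n k0 <= 1 -> k0 <= k -> n k <= 1.
Proof.
move=> nk0 /subnK <-; elim: (k - k0) => [|d IH] //.
have [inJ outJ] := chain_le1_step IH; rewrite addSn.
by case Hc: (c (d + k0) \in J) in inJ outJ; [have [-> _] := inJ erefl | have [-> _] := outJ erefl].
Qed.

Lemma chain_inext k : inext (c k.+1) = c k.
Proof. by rewrite iterS inext_iprev. Qed.

Lemma chain_small k0 : n k0 <= 1 ->
  exceptional_I /\
  forall k, k0 < k -> n k = (inext (c k) \in J) /\ (c k \in J -> n k + r (c k) = p).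
Proof.
move=> nk0; have small k : k0 <= k -> n k <= 1 := chain_le1_stable nk0.
have later k : k0 < k -> n k = (inext (c k) \in J).
  case: k => [|k] // lt; rewrite chain_inext.
  have [inJ outJ] := chain_le1_step (small k lt).
  by case Hc: (c k \in J) in inJ outJ *; [have [-> _] := inJ erefl | have [-> _] := outJ erefl].
have loc k : k0 < k -> (c k \in J -> n k + r (c k) = p) /\
                      (c k \notin J -> r (c k) = 1 /\ inext (c k) \in J).
  move=> lt; have [inJ outJ] := chain_le1_step (small k (ltnW lt)).
  split=> Hc; first by have [_] := inJ Hc; lia.
  by have [_ [nk ->]] := outJ Hc; move: (later k lt); rewrite nk; case: (_ \in J).
split; last by move=> k lt; split; [exact: later | exact: (loc k lt).1].
apply: exceptional_I_of_local => j;
  have [k lt <-] := iter_iprev_hits i k0.+1 j; have [inJ outJ] := loc k lt.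
- by move=> /inJ; rewrite later // addnC.
- exact: outJ.
Qed.

Lemma chain_large : (forall k, 1 < n k) -> exceptional_II /\ forall k, n k = 2.
Proof.
move=> big; have two k : n k = 2 by have := chain_le2 k; have := big k; lia.
have loc k : c k \in J /\ r (c k) = 2 /\ p = 2.
  have [inJ outJ] := chain_step k; rewrite !two in inJ outJ; have := r_range (c k).
  by case Hc: (c k \in J) in inJ outJ *; [have := inJ erefl | have := outJ erefl]; nia.
split=> //; split; first by have [_ []] := loc 0.
split=> [j|]; first by have [k _ <-] := iter_iprev_hits i 0 j; have [_ []] := loc k.
by apply/setP => j; rewrite inE; have [k _ <-] := iter_iprev_hits i 0 j; have [] := loc k.
Qed.

Lemma chain_exceptional : exists K G d,
  [/\ exceptional_deg d,
      forall k, K <= k -> n k = G (c k)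
    & forall k, K <= k -> c k \in J -> n k + h (c k) = d].
Proof.
case: (classic (exists k, n k <= 1)) => [[k0 nk0]|large].
  have [excI later] := chain_small nk0.
  exists k0.+1, (fun j : 'I_f => nat_of_bool (inext j \in J)), p; split.
  - by left.
  - by move=> k lt; have [] := later k lt.
  - by move=> k lt Hc; rewrite /hJ Hc; exact: (later k lt).2.
have big k : 1 < n k by rewrite ltnNge; apply/negP => nk; apply: large; exists k.
have [[p2 [r2 JT]] two] := chain_large big.
exists 0, (fun _ => 2), 4; split=> [|k _|k _ _]; rewrite ?two //.
  by right.
by rewrite /hJ JT inE r2.
Qed.
End Chain.
End ChainArithmetic.

Local Open Scope ring_scope.

Section SeriesCoefficients.
Variable R : comNzRingType.
Implicit Types (x y : pser R) (c : R).

Lemma coefsD x y n : coefs (x + y) n = coefs x n + coefs y n. Proof. by []. Qed.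
Lemma coefsB x y n : coefs (x - y) n = coefs x n - coefs y n. Proof. by []. Qed.
Lemma coefsM x y n :
  coefs (x * y) n = \sum_(j < n.+1) coefs x j * coefs y (n - j).
Proof. by []. Qed.
Lemma coefs1 n : coefs (1 : pser R) n = (n == 0)%:R. Proof. by []. Qed.

Lemma coefs_constM c y n : coefs (pser_const c * y) n = c * coefs y n.
Proof.
by rewrite coefsM big_ord_recl subn0 big1 ?addr0 // => j _; rewrite mul0r.
Qed.

Lemma coefs_uM y n : coefs (pser_u R * y) n = if n is n'.+1 then coefs y n' else 0.
Proof.
rewrite coefsM; case: n => [|n]; first by rewrite big_ord1 mul0r.
rewrite big_ord_recl mul0r add0r big_ord_recl /= mul1r subn1.
by rewrite big1 ?addr0 // => j _; rewrite mul0r.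
Qed.

Lemma coefs_uXM k y n :
  coefs (pser_u R ^+ k * y) n = if (k <= n)%N then coefs y (n - k) else 0.
Proof.
elim: k n => [|k IH] n; first by rewrite expr0 mul1r subn0.
by rewrite exprS -mulrA coefs_uM; case: n => [|n] //; rewrite IH subSS.
Qed.

Lemma coefs_uX k n : coefs (pser_u R ^+ k) n = (n == k)%:R.
Proof.
rewrite -[pser_u R ^+ k]mulr1 coefs_uXM coefs1 subn_eq0 eqn_leq.
by case: (k <= n)%N; rewrite ?andbT ?andbF.
Qed.

Lemma coefs_monomialM c k y n :
  coefs (pser_const c * pser_u R ^+ k * y) n =
  if (k <= n)%N then c * coefs y (n - k) else 0.
Proof. by rewrite -mulrA coefs_constM coefs_uXM; case: ifP; rewrite ?mulr0. Qed.

Lemma pser_frob1 p : (0 < p)%N -> pser_frob p (1 : pser R) = 1.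
Proof.
move=> p_gt0; apply: pser_ext => n /=.
case: ifP => [/dvdnP [q ->]|]; first by rewrite mulnK // muln_eq0 (negbTE (lt0n_neq0 p_gt0)) orbF.
by case: n => // /negbT; rewrite dvdn0.
Qed.

Lemma deg_lt_plus_monomial x h d :
  (forall m, (h <= m)%N -> m != d -> coefs x m = 0) ->
  exists y c, pser_deg_lt y h /\ x = y + pser_const c * pser_u R ^+ d.
Proof.
move=> x_high; pose c := coefs x d.
exists (x - pser_const c * pser_u R ^+ d), c; split; last by rewrite subrK.
move=> m hm; rewrite coefsB coefs_constM coefs_uX.
have [->|md] := eqVneq m d; first by rewrite mulr1 subrr.
by rewrite mulr0 subr0 x_high.
Qed.
End SeriesCoefficients.

Lemma twist_neq0 (F : nzRingType) f (x : F) (i : 'I_f) : x != 0 -> twist x i != 0.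
Proof. by rewrite /twist; case: ifP => // _ _; exact: oner_neq0. Qed.

Section CoefficientSystem.
Variables (p f : nat) (p_ge2 : (2 <= p)%N) (f_gt0 : (0 < f)%N) (r : 'I_f -> nat).
Hypothesis r_range : forall i, (1 <= r i <= p)%N.
Variables (J : {set 'I_f}) (kE : finFieldType) (a b : kE).
Hypotheses (a_neq0 : a != 0) (b_neq0 : b != 0).
Variable cut : 'I_f -> nat -> bool.
Local Notation h := (hJ J r).
Local Notation s i := (r i - hJ J r i)%N.

(* Equation (i, n) of the system T z = y says that the coefficient of
   u^(n + h_i) in the new x_i vanishes.  It involves z_i[n] and, when
   n + h_i - s_i is a nonnegative multiple of p, also z_{i-1}[back_deg i n];
   a cut equation is given up, and only the first term is kept. *)
Definition back_deg i n := ((n + h i - s i) %/ p)%N.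
Definition linked i n :=
  [&& (s i <= n + h i)%N, (p %| n + h i - s i)%N & ~~ cut i n].
Definition opT (z : 'I_f -> nat -> kE) i n :=
  twist a i * z i n
  - (if linked i n then twist b i * z (iprev i) (back_deg i n) else 0).

(* The unknowns z_i[n] with n <= 2 form a T-stable block; T is invertible
   as soon as it is injective on that block. *)
Definition low_injective := forall z,
  (forall i n, (n <= 2)%N -> opT z i n = 0) -> forall i n, (n <= 2)%N -> z i n = 0.

Lemma hJ_le_p i : (h i <= p)%N.
Proof. by have := r_range i; rewrite /hJ; case: (_ \in _); lia. Qed.

Lemma back_deg_le2 i n : (n <= 2 -> back_deg i n <= 2)%N.
Proof.
move=> n_le2; rewrite /back_deg -ltnS ltn_divLR; last by lia.
by have := hJ_le_p i; nia.
Qed.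

Lemma back_deg_lt i n : (3 <= n -> back_deg i n < n)%N.
Proof.
move=> n_ge3; rewrite /back_deg ltn_divLR; last by lia.
by have := hJ_le_p i; nia.
Qed.

Lemma linked_rel i n : linked i n ->
  (s i <= n + h i)%N /\ (p * back_deg i n = n + h i - s i)%N.
Proof. by case/and3P => lo dv _; split => //; rewrite /back_deg mulnC divnK. Qed.

Definition low_part (w : {ffun 'I_f * 'I_3 -> kE}) i n : kE :=
  if (n < 3)%N then w (i, inord n) else 0.

(* The low block: an injective self-map of the finite set of low
   coefficient families is onto. *)
Lemma solve_low (y : 'I_f -> nat -> kE) : low_injective ->
  exists w, forall i n, (n <= 2)%N -> opT (low_part w) i n = y i n.
Proof.
move=> low_inj.
pose T (w : {ffun 'I_f * 'I_3 -> kE}) : {ffun 'I_f * 'I_3 -> kE} :=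
  [ffun v => opT (low_part w) v.1 (val v.2)].
have T_inj : injective T.
  move=> w1 w2 E; apply/ffunP => -[i j].
  suff : low_part w1 i j - low_part w2 i j = 0.
    by rewrite /low_part ltn_ord inord_val => /eqP; rewrite subr_eq0 => /eqP.
  apply: (low_inj (fun i n => low_part w1 i n - low_part w2 i n)) => [i' n n_le2|];
    last by have := ltn_ord j; lia.
  have := congr1 (fun F : {ffun 'I_f * 'I_3 -> kE} => F (i', inord n)) E; rewrite !ffunE /= inordK; last by lia.
  move/eqP; rewrite -subr_eq0 => /eqP <-.
  by rewrite /opT; case: (linked i' n); rewrite ?subr0; ring.
have [Tinv _ TinvK] := injF_bij T_inj.
pose Y : {ffun 'I_f * 'I_3 -> kE} := [ffun v => y v.1 (val v.2)].
exists (Tinv Y) => i n n_le2.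
have := congr1 (fun F : {ffun 'I_f * 'I_3 -> kE} => F (i, inord n)) (TinvK Y).
by rewrite !ffunE /= inordK.
Qed.

(* Above the low block T is triangular: equation (i, n) determines z_i[n]
   from y_i[n] and z_{i-1} at the smaller degree back_deg i n.  The
   recursion is run with fuel k, which suffices for degrees n <= k. *)
Section HighDegrees.
Variables (y : 'I_f -> nat -> kE) (w : {ffun 'I_f * 'I_3 -> kE}).

Fixpoint climb k i n : kE :=
  if k is k'.+1 then
    if (n < 3)%N then low_part w i n
    else (y i n + (if linked i n
                   then twist b i * climb k' (iprev i) (back_deg i n) else 0))
         / twist a i
  else low_part w i n.

Lemma climb_succ k i n : climb k.+1 i n =
  if (n < 3)%N then low_part w i n
  else (y i n + (if linked i n
                 then twist b i * climb k (iprev i) (back_deg i n) else 0))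
       / twist a i.
Proof. by []. Qed.

Lemma climbS k i n : (n <= k)%N -> climb k.+1 i n = climb k i n.
Proof.
elim: k i n => [|k IH] i n n_le; first by have -> : n = 0%N by lia.
rewrite climb_succ [RHS]climb_succ; case: ifP => // n_ge3.
by rewrite IH //; have := back_deg_lt i (n := n); lia.
Qed.

Lemma climb_stable k i n : (n <= k)%N -> climb k i n = climb n i n.
Proof.
move/subnK <-; elim: (k - n)%N => [|d IH] //.
by rewrite addSn climbS // leq_addl.
Qed.

Lemma opT_climb :
  (forall i n, (n <= 2)%N -> opT (low_part w) i n = y i n) ->
  forall i n, opT (fun j m => climb m j m) i n = y i n.
Proof.
move=> low i n; have low_climb j m : (m < 3)%N -> climb m j m = low_part w j m.
  by case: m => //= m ->.
case: (ltnP n 3) => n3.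
  rewrite -low; last by lia.
  rewrite /opT !low_climb //; have := back_deg_le2 i (n := n); lia.
case: n n3 => [|n] // n3; rewrite /opT climb_succ ltnNge n3 /=.
rewrite (climb_stable (k := n)); last by have := back_deg_lt i n3; lia.
by rewrite mulrC divfK ?twist_neq0 // addrK.
Qed.
End HighDegrees.

Lemma solve_system : low_injective ->
  forall y, exists z, forall i n, opT z i n = y i n.
Proof.
move=> low_inj y; have [w low] := solve_low y low_inj.
by exists (fun j m => climb y w m j m); exact: opT_climb.
Qed.

(* A nonzero solution of the homogeneous low system propagates backwards
   along the cycle: z_i[n] != 0 forces z_{i-1}[back_deg i n] != 0, and so on. *)
Section KernelChain.
Variables (z : 'I_f -> nat -> kE) (z_ker : forall i n, (n <= 2)%N -> opT z i n = 0).
Variables (i : 'I_f) (n0 : nat) (n0_le2 : (n0 <= 2)%N) (z_neq0 : z i n0 != 0).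
Local Notation c k := (iter k (@iprev f) i).

Fixpoint kernel_deg k := if k is k'.+1 then back_deg (c k') (kernel_deg k') else n0.

Lemma kernel_chain_nz k :
  [/\ (kernel_deg k <= 2)%N, z (c k) (kernel_deg k) != 0 & linked (c k) (kernel_deg k)].
Proof.
have forced j m : (m <= 2)%N -> z j m != 0 -> linked j m.
  move=> m_le2 nz; apply: contraT => /negbTE unl; move: (z_ker j m_le2).
  by rewrite /opT unl subr0 => /eqP; rewrite mulf_eq0 (negbTE (twist_neq0 _ a_neq0)) (negbTE nz).
suff H : (kernel_deg k <= 2)%N /\ z (c k) (kernel_deg k) != 0.
  by have [le nz] := H; split => //; exact: forced.
elim: k => [|k [le nz]] //=; split; first exact: back_deg_le2.
move: (z_ker (c k) le); rewrite /opT (forced _ _ le nz) => /eqP; rewrite subr_eq0.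
apply: contraTneq => ->; rewrite mulr0 mulf_eq0 negb_or twist_neq0 //.
Qed.

Lemma kernel_chain_transfer k :
  twist a (c k) * z (c k) (kernel_deg k) = twist b (c k) * z (c k.+1) (kernel_deg k.+1).
Proof.
have [le _ lk] := kernel_chain_nz k; move: (z_ker (c k) le).
by rewrite /opT lk => /eqP; rewrite subr_eq0 => /eqP.
Qed.

Lemma kernel_chain_is_chain : is_chain p r J i kernel_deg.
Proof. by move=> k; have [_ _ /linked_rel] := kernel_chain_nz k. Qed.

(* If the degrees become a function of the index, then following the chain
   once around the cycle multiplies z by b/a at index 0 and by 1 elsewhere,
   so a = b. *)
Lemma kernel_chain_a_eq_b K (G : 'I_f -> nat) :
  (forall k, (K <= k)%N -> kernel_deg k = G (c k)) -> a = b.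
Proof.
move=> periodic; have [k0 k0_ge c0] := iter_iprev_hits i K (Ordinal f_gt0).
pose W k := z (c k) (kernel_deg k).
have step j : (0 < j < f)%N -> W (j + k0) = W (j + k0).+1.
  move=> jf; have := kernel_chain_transfer (j + k0).
  have nz : val (c (j + k0)) != 0%N.
    rewrite iterD c0; apply: contra (iter_iprev_neq (Ordinal f_gt0) jf) => /eqP v0.
    by apply/eqP/val_inj.
  by rewrite /twist (negbTE nz) !mul1r.
have around j : (0 < j <= f)%N -> W k0.+1 = W (j + k0).
  elim: j => [|[|j] IH] // jf; rewrite IH ?(step j.+1) //; lia.
have full : W (f + k0) = W k0.
  have cf : c (f + k0) = c k0 by rewrite iterD iter_iprev_f.
  by rewrite /W cf !periodic ?cf //; lia.
have [_ nz _] := kernel_chain_nz k0.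
have := kernel_chain_transfer k0; rewrite -/(W k0) -/(W k0.+1) (around f) ?full;
  last by rewrite f_gt0 leqnn.
by rewrite c0 /twist /= => /(mulIf nz).
Qed.
End KernelChain.

Lemma low_injectiveP :
  (forall z, (forall i n, (n <= 2)%N -> opT z i n = 0) ->
   forall i n, (n <= 2)%N -> z i n != 0 -> False) -> low_injective.
Proof.
move=> no_chain z z_ker i n n_le2; apply/eqP; apply: contraT => nz.
by case: (no_chain z z_ker i n n_le2 nz).
Qed.

Lemma low_injective_generic :
  (forall d, exceptional_deg p r J d -> a != b) -> low_injective.
Proof.
move=> generic; apply: low_injectiveP => z z_ker i n n_le2 z_neq0.
have chain := kernel_chain_is_chain z_ker n_le2 z_neq0.
have [K [G [d [exc periodic _]]]] := chain_exceptional p_ge2 r_range chain n_le2.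
by move: (generic d exc); rewrite (kernel_chain_a_eq_b z_ker n_le2 z_neq0 periodic) eqxx.
Qed.

Lemma low_injective_exceptional d i0 :
  exceptional_deg p r J d -> i0 \in J ->
  (forall i n, cut i n = (i == i0) && (n + h i == d)%N) -> low_injective.
Proof.
move=> exc i0J cutE; apply: low_injectiveP => z z_ker i n n_le2 z_neq0.
have chain := kernel_chain_is_chain z_ker n_le2 z_neq0.
have [K [G [d' [exc' _ hit]]]] := chain_exceptional p_ge2 r_range chain n_le2.
have [k k_ge ck] := iter_iprev_hits i K i0.
have [_ _] := kernel_chain_nz z_ker n_le2 z_neq0 k.
have ckJ : iter k (@iprev f) i \in J by rewrite ck.
rewrite /linked cutE ck eqxx -ck hit // (exceptional_deg_unique f_gt0 exc' exc).
by rewrite eqxx !andbF.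
Qed.
End CoefficientSystem.

Section ExtensionBases.
Variables (p : nat) (p_prime : prime p) (f : nat) (f_gt0 : (0 < f)%N).
Variables (kE : finFieldType) (r : 'I_f -> nat).
Hypothesis r_range : forall i, (1 <= r i <= p)%N.
Variables (J : {set 'I_f}) (a b : kE).
Hypotheses (a_neq0 : a != 0) (b_neq0 : b != 0).
(* The component index of phiM, iota and pi is kept explicit. *)
Unset Implicit Arguments.
Variables (M : 'I_f -> lmodType (pser kE))
  (phiM : forall i : 'I_f, M (iprev i) -> M i)
  (iota : forall i : 'I_f, pser kE -> M i)
  (pi : forall i : 'I_f, M i -> pser kE).
Hypothesis ext : is_extension p (fun i => (r i - hJ J r i)%N) b (hJ J r) a
                              M phiM iota pi.
Set Implicit Arguments.
Local Notation h := (hJ J r).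
Local Notation s i := (r i - hJ J r i)%N.
Let p_ge2 : (2 <= p)%N := prime_gt1 p_prime.

Definition coefA i : pser kE := pser_const (twist a i) * pser_u kE ^+ h i.
Definition coefB i : pser kE := pser_const (twist b i) * pser_u kE ^+ s i.

Lemma phiD i (m m' : M (iprev i)) : phiM i (m + m') = phiM i m + phiM i m'.
Proof. by have [H _] := ext; apply: H. Qed.
Lemma phiZ i x (m : M (iprev i)) : phiM i (x *: m) = pser_frob p x *: phiM i m.
Proof. by have [_ [H _]] := ext; apply: H. Qed.
Lemma iota_lin i x y z : iota i (x * y + z) = x *: iota i y + iota i z.
Proof. by have [_ [_ [H _]]] := ext; apply: H. Qed.
Lemma pi_lin i x (m m' : M i) : pi i (x *: m + m') = x * pi i m + pi i m'.
Proof. by have [_ [_ [_ [H _]]]] := ext; apply: H. Qed.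
Lemma phi_iota i x : phiM i (iota (iprev i) x) = iota i (phi_rk1 p (fun j => s j) b i x).
Proof. by have [_ [_ [_ [_ [H _]]]]] := ext; apply: H. Qed.
Lemma pi_phi i (m : M (iprev i)) : pi i (phiM i m) = phi_rk1 p h a i (pi (iprev i) m).
Proof. by have [_ [_ [_ [_ [_ [H _]]]]]] := ext; apply: H. Qed.
Lemma iota_inj i : injective (iota i).
Proof. by have [_ [_ [_ [_ [_ [_ [H _]]]]]]] := ext; apply: H. Qed.
Lemma pi_surj i y : exists m : M i, pi i m = y.
Proof. by have [_ [_ [_ [_ [_ [_ [_ [H _]]]]]]]] := ext; apply: H. Qed.
Lemma pi_ker i (m : M i) : pi i m = 0 <-> exists x, m = iota i x.
Proof. by have [_ [_ [_ [_ [_ [_ [_ [_ H]]]]]]]] := ext; apply: H. Qed.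

Definition e i : M i := iota i 1.

Lemma iota0 i : iota i 0 = 0.
Proof.
have := iota_lin i 1 0 0; rewrite mulr0 addr0 scale1r => E.
by apply: (addrI (iota i 0)); rewrite addr0 -E.
Qed.

Lemma iotaE i y : iota i y = y *: e i.
Proof. by have := iota_lin i y 1 0; rewrite mulr1 addr0 iota0 addr0. Qed.

Lemma piZ i x (m : M i) : pi i (x *: m) = x * pi i m.
Proof.
have pi0 : pi i 0 = 0.
  have := @pi_lin i 1 0 0; rewrite scaler0 addr0 mul1r => E.
  by apply: (addrI (pi i 0)); rewrite addr0 -E.
by rewrite -[x *: m]addr0 pi_lin pi0 addr0.
Qed.

Lemma piD i (m m' : M i) : pi i (m + m') = pi i m + pi i m'.
Proof. by rewrite -[m]scale1r pi_lin scale1r mul1r. Qed.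

Lemma pi_e i : pi i (e i) = 0.
Proof. by apply/pi_ker; exists 1. Qed.

Lemma pi_kerE i (m : M i) : pi i m = 0 -> exists y, m = y *: e i.
Proof. by move/pi_ker => [y ->]; exists y; rewrite iotaE. Qed.

Lemma phi_e i : phiM i (e (iprev i)) = coefB i *: e i.
Proof. by rewrite phi_iota /phi_rk1 pser_frob1 ?prime_gt0 // mulr1 iotaE. Qed.

Lemma basis_of_lift i (g : M i) : pi i g = 1 -> is_basis2 (e i) g.
Proof.
move=> pig m.
have [y Hy] : exists y, - pi i m *: g + m = y *: e i.
  by apply: pi_kerE; rewrite pi_lin pig mulr1 addNr.
exists (y, pi i m); split => [|[y1 y2] /= E].
  by rewrite /= -Hy scaleNr addrAC addNr add0r.
have E2 : pi i m = y2 by rewrite E piD !piZ pi_e pig mulr0 mulr1 add0r.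
rewrite -E2 in E *; congr (_, _).
have : iota i (y - y1) = 0.
  by rewrite iotaE scalerBl -Hy {2}E scaleNr addrCA addNr addr0 subrr.
by rewrite -(iota0 i) => /iota_inj /eqP; rewrite subr_eq0 => /eqP.
Qed.

Definition lift1 i : M i :=
  proj1_sig (constructive_indefinite_description _ (pi_surj i 1)).
Lemma pi_lift1 i : pi i (lift1 i) = 1.
Proof. exact: proj2_sig (constructive_indefinite_description _ (pi_surj i 1)). Qed.

(* phi(lift1_{i-1}) = A_i lift1_i + x0_i e_i for some x0_i, since its image
   in the quotient is A_i. *)
Lemma phi_lift1_ex i : exists x, phiM i (lift1 (iprev i)) = coefA i *: lift1 i + x *: e i.
Proof.
have [x Hx] : exists x, - coefA i *: lift1 i + phiM i (lift1 (iprev i)) = x *: e i.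
  apply: pi_kerE; rewrite pi_lin pi_phi !pi_lift1 /phi_rk1.
  by rewrite pser_frob1 ?prime_gt0 // !mulr1 addNr.
by exists x; rewrite -Hx scaleNr addNKr.
Qed.

Definition x0 i : pser kE :=
  proj1_sig (constructive_indefinite_description _ (phi_lift1_ex i)).
Lemma phi_lift1 i : phiM i (lift1 (iprev i)) = coefA i *: lift1 i + x0 i *: e i.
Proof. exact: proj2_sig (constructive_indefinite_description _ (phi_lift1_ex i)). Qed.

Lemma phi_shifted_lift (z : 'I_f -> pser kE) i :
  phiM i (lift1 (iprev i) + z (iprev i) *: e (iprev i)) =
  coefA i *: (lift1 i + z i *: e i)
  + (x0 i - coefA i * z i + coefB i * pser_frob p (z (iprev i))) *: e i.
Proof.
rewrite phiD phiZ phi_e phi_lift1 scalerA scalerDr !scalerDl scaleNr scalerA.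
by rewrite [pser_frob _ _ * _]mulrC [_ *: e i - _]addrC !addrA addrK.
Qed.

Lemma coefs_shifted_x cut (z : 'I_f -> nat -> kE) i n : ~~ cut i n ->
  let Z j := Pser (z j) in
  coefs (x0 i - coefA i * Z i + coefB i * pser_frob p (Z (iprev i))) (n + h i) =
  coefs (x0 i) (n + h i) - opT p r J a b cut z i n.
Proof.
move=> uncut Z; rewrite coefsD coefsB /coefA /coefB -[coefs (_ * Z i) _]mulr1.
rewrite -[coefs (_ * pser_frob _ _) _]mulr1 !coefs_monomialM leq_addl addnK /=.
rewrite /opT /linked uncut andbT; case: (s i <= _)%N; case: (p %| _)%N => /=;
  rewrite ?mulr0; ring.
Qed.

Lemma adapted_bases cut : low_injective p r J a b cut ->
  exists (e' g : forall i, M i) (x : 'I_f -> pser kE),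
    [/\ forall i, is_basis2 (e' i) (g i),
        forall i (m : M i), (exists y, m = iota i y) <-> (exists y, m = y *: e' i),
        forall i, phiM i (e' (iprev i)) = coefB i *: e' i,
        forall i, phiM i (g (iprev i)) = coefA i *: g i + x i *: e' i
      & forall i n, ~~ cut i n -> coefs (x i) (n + h i) = 0].
Proof.
move=> low_inj.
have [z solved] := solve_system p_ge2 f_gt0 r_range a_neq0 b_neq0 low_inj
  (fun i n => coefs (x0 i) (n + h i)).
pose Z i := Pser (z i).
exists e, (fun i => lift1 i + Z i *: e i),
  (fun i => x0 i - coefA i * Z i + coefB i * pser_frob p (Z (iprev i))); split.
- by move=> i; apply: basis_of_lift; rewrite piD piZ pi_e mulr0 addr0 pi_lift1.
- by move=> i m; split => -[y ->]; exists y; rewrite iotaE.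
- exact: phi_e.
- exact: phi_shifted_lift.
- by move=> i n uncut; rewrite (coefs_shifted_x z uncut) solved subrr.
Qed.

Lemma good_bases_of_cut cut (shape : 'I_f -> pser kE -> Prop) :
  low_injective p r J a b cut ->
  (forall i x, (forall n, ~~ cut i n -> coefs x (n + h i) = 0) -> shape i x) ->
  good_bases p (fun i => s i) b h a M phiM iota shape.
Proof.
move=> low_inj shapeP; have [e' [g [x [bas sub phie phig xc]]]] := adapted_bases low_inj.
by exists e', g, x; split => // i; apply: shapeP; exact: xc.
Qed.

Lemma good_bases_generic :
  (forall d, exceptional_deg p r J d -> a != b) ->
  good_bases p (fun i => s i) b h a M phiM iota (fun i x => pser_deg_lt x (h i)).
Proof.
move=> generic; apply: (good_bases_of_cut (cut := fun _ _ => false)).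
  exact: (low_injective_generic p_ge2 f_gt0 r_range a_neq0 b_neq0).
by move=> i x xc m /subnK <-; apply: xc.
Qed.

Lemma good_bases_exceptional d i0 :
  exceptional_deg p r J d -> i0 \in J ->
  good_bases p (fun i => s i) b h a M phiM iota
    (fun i x => if i == i0 then
       exists (y : pser kE) (c : kE),
         pser_deg_lt y (h i) /\ x = y + pser_const c * pser_u kE ^+ d
     else pser_deg_lt x (h i)).
Proof.
move=> exc i0J.
apply: (good_bases_of_cut (cut := fun i n => (i == i0) && (n + h i == d)%N)).
  exact: (low_injective_exceptional p_ge2 f_gt0 r_range a_neq0 b_neq0 exc i0J).
move=> i x xc; case: eqP => [_|/eqP ni0].
  by apply: deg_lt_plus_monomial => m /subnK mh md; rewrite -mh xc // mh (negbTE md) andbF.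
by move=> m /subnK <-; apply: xc; rewrite (negbTE ni0).
Qed.
End ExtensionBases.

Theorem mainTheorem8
  (p : nat) (p_prime : prime p)
  (f : nat) (f_gt0 : (0 < f)%N)
  (kE : finFieldType) (kE_char : p \in [pchar kE])
  (kE_contains_k : (f %| logn p #|kE|)%N)
  (r : 'I_f -> nat) (r_range : forall i, (1 <= r i <= p)%N)
  (J : {set 'I_f})
  (a b : kE) (a_neq0 : a != 0) (b_neq0 : b != 0)
  (M : 'I_f -> lmodType (pser kE))
  (phiM : forall i : 'I_f, M (iprev i) -> M i)
  (iota : forall i : 'I_f, pser kE -> M i)
  (pi : forall i : 'I_f, M i -> pser kE)
  (ext : is_extension p (fun i => (r i - hJ J r i)%N) b (hJ J r) a
                      M phiM iota pi) :
  (* generic case *)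
  ( ~ (inP p r /\ J = [set i | r (iprev i) != p] /\ a = b) ->
    ~ (p = 2%N /\ (forall i, r i = 2%N) /\ J = [set: 'I_f] /\ a = b) ->
    good_bases p (fun i => (r i - hJ J r i)%N) b (hJ J r) a M phiM iota
      (fun i x => pser_deg_lt x (hJ J r i)) )
  /\
  (* exceptional case (i) *)
  ( inP p r /\ J = [set i | r (iprev i) != p] /\ a = b ->
    forall i0, i0 \in J ->
    good_bases p (fun i => (r i - hJ J r i)%N) b (hJ J r) a M phiM iota
      (fun i x => if i == i0 then
         exists (y : pser kE) (c : kE),
           pser_deg_lt y (hJ J r i) /\ x = y + pser_const c * pser_u kE ^+ p
       else pser_deg_lt x (hJ J r i)) )
  /\
  (* exceptional case (ii) *)
  ( p = 2%N /\ (forall i, r i = 2%N) /\ J = [set: 'I_f] /\ a = b ->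
    forall i0, i0 \in J ->
    good_bases p (fun i => (r i - hJ J r i)%N) b (hJ J r) a M phiM iota
      (fun i x => if i == i0 then
         exists (y : pser kE) (c : kE),
           pser_deg_lt y (hJ J r i) /\ x = y + pser_const c * pser_u kE ^+ 4
       else pser_deg_lt x (hJ J r i)) ).
Proof.
split; [|split].
- move=> notI notII; apply: (good_bases_generic p_prime f_gt0 r_range a_neq0 b_neq0 ext).
  move=> d [[[inPr JE] _]|[[p2 [r2 JT]] _]]; apply/eqP => ab.
    exact: notI (conj inPr (conj JE ab)).
  exact: notII (conj p2 (conj r2 (conj JT ab))).
- move=> [inPr [JE _]] i0 i0J.
  by apply: (good_bases_exceptional p_prime f_gt0 r_range a_neq0 b_neq0 ext) => //; left.
- move=> [p2 [r2 [JT _]]] i0 i0J.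
  by apply: (good_bases_exceptional p_prime f_gt0 r_range a_neq0 b_neq0 ext) => //; right.
Qed.
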